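(* Let $G=G_{(X,I)}=(Q,A,E)$ be a $d$-dim PNS with $J=[1,d]\setminus I$. For all $p\in Q$ and $x,y\in\mathbb{N}^J$: $(p,x)\dashrightarrow^*(p,y)$ in $G$ if and only if $y-x\in(A_{SC}^G)_\Delta^*$ (i.e., $x\dashrightarrow^* y$ in the net $A_{SC}^G$). Moreover, $\|A_{SC}^G\|\leq\|A\|\cdot|Q|$.
   Context: A $d$-dim Petri net $A$ is a finite set of actions $(a_-,a_+)\in\mathbb{N}^d\times\mathbb{N}^d$, with $\Delta(a)=a_+-a_-$ and $\|A\|$ the maximal entry of all $a_-,a_+$; for an action sequence $\sigma=a_1\cdots a_k$, $\Delta(\sigma)=\sum_j\Delta(a_j)$. $A$ is conservative if some $w\in(\mathbb{N}_+)^d$ satisfies $\langle\Delta(a),w\rangle=0$ for all $a$. Steps: $x\xrightarrow{a}y$ iff $x=c+a_-$, $y=c+a_+$, $c\in\mathbb{N}^d$; a bottom SCC is a nonempty set $X$ of configurations with $\{y\mid x\xrightarrow{*}y\}=X$ for all $x\in X$. For $I\subseteq[1,d]$, $x|_I$ denotes restriction to $I$ and $A|_I$ the net with actions $((a_-)|_I,(a_+)|_I)$. A $d$-dim PNS is $G=G_{(X,I)}=(Q,A,E)$ where $A$ is a conservative $d$-dim net, $X$ a bottom SCC of $A$, $I\subseteq[1,d]$, $Q=\{x|_I\mid x\in X\}$, and $E=\{(p,a,q)\in Q\times A\times Q\mid p\xrightarrow{a}q\text{ in }A|_I\}$. Configurations of $G$ are pairs $(p,x)$, $p\in Q$, $x\in\mathbb{N}^J$.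 Virtual reachability in $G$: $(p,x)\dashrightarrow^*(q,y)$ iff there is a path from $p$ to $q$ in the labelled graph $(Q,A,E)$ labelled by some $\sigma$ with $\Delta(\sigma)|_J=y-x$. The $|J|$-dim net $A_{SC}^G$ has, for each $z$ in the set of displacements $\Delta(\sigma)|_J$ of simple cycles (labelled $\sigma$) of the graph $(Q,A,E)$, the action $(z_-,z_+)$ where $z_+=\max(z,\mathbf{0})$ and $z_-=\max(-z,\mathbf{0})$ componentwise; $(A_{SC}^G)_\Delta^*$ is the set of finite sums of these displacements $z$. *)

From HB Require Import structures.
From Stdlib Require Import Relations.Relation_Operators.
From mathcomp Require Import all_boot all_order all_algebra.
Set Implicit Arguments. Unset Strict Implicit. Unset Printing Implicit Defensive.
Import Order.TTheory GRing.Theory Num.Theory.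
Local Open Scope ring_scope.

(* Vectors in N^d and Z^d, indexed by 'I_d (coordinates 0..d-1 stand for 1..d). *)
Definition vec (d : nat) := {ffun 'I_d -> nat}.
Definition ivec (d : nat) := {ffun 'I_d -> int}.
(* An action (a_-, a_+): a.1 = a_-, a.2 = a_+. A net is a finite set (seq) of actions. *)
Definition act (d : nat) := (vec d * vec d)%type.

Definition vadd d (x y : vec d) : vec d := [ffun i => (x i + y i)%N].
Definition toZ d (x : vec d) : ivec d := [ffun i => (x i)%:Z].

Definition Delta d (a : act d) : ivec d := toZ a.2 - toZ a.1.
Definition DeltaSeq d (s : seq (act d)) : ivec d := \sum_(a <- s) Delta a.

Definition normA d (A : seq (act d)) : nat :=
  \max_(a <- A) \max_(i < d) maxn (a.1 i) (a.2 i).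

Definition step d (A : seq (act d)) (x y : vec d) : Prop :=
  exists a, a \in A /\ exists c : vec d, x = vadd c a.1 /\ y = vadd c a.2.
Definition reach d (A : seq (act d)) : vec d -> vec d -> Prop :=
  clos_refl_trans (vec d) (step A).

Definition conservative d (A : seq (act d)) : Prop :=
  exists w : 'I_d -> nat, (forall i, (0 < w i)%N) /\
    forall a, a \in A -> \sum_(i < d) Delta a i * (w i)%:Z = 0.

Definition bottomSCC d (A : seq (act d)) (X : vec d -> Prop) : Prop :=
  (exists x, X x) /\ forall x, X x -> forall y, reach A x y <-> X y.

(* Restriction x|_I, represented as the vector padded by 0 outside I. *)
Definition restr d (I : {set 'I_d}) (x : vec d) : vec d :=
  [ffun i => if i \in I then x i else 0%N].
Definition restrZ d (J : {set 'I_d}) (z : ivec d) : ivec d :=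
  [ffun i => if i \in J then z i else 0].
Definition restrA d (I : {set 'I_d}) (a : act d) : act d := (restr I a.1, restr I a.2).

Definition inQ d (X : vec d -> Prop) (I : {set 'I_d}) (p : vec d) : Prop :=
  exists x, X x /\ p = restr I x.

Definition stepI d (I : {set 'I_d}) (p : vec d) (a : act d) (q : vec d) : Prop :=
  exists c : vec d, p = vadd c (restrA I a).1 /\ q = vadd c (restrA I a).2.

Definition edge d (A : seq (act d)) (X : vec d -> Prop) (I : {set 'I_d})
  (p : vec d) (a : act d) (q : vec d) : Prop :=
  inQ X I p /\ a \in A /\ inQ X I q /\ stepI I p a q.

(* A path from p in the graph (Q,A,E): list of (label, next vertex). *)
Fixpoint gpath d (A : seq (act d)) (X : vec d -> Prop) (I : {set 'I_d})
  (p : vec d) (s : seq (act d * vec d)) : Prop :=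
  match s with
  | [::] => True
  | (a, q) :: s' => edge A X I p a q /\ gpath A X I q s'
  end.

Definition pend d (p : vec d) (s : seq (act d * vec d)) : vec d := last p (map snd s).
Definition labels d (s : seq (act d * vec d)) : seq (act d) := map fst s.

Definition vreach d (A : seq (act d)) (X : vec d -> Prop) (I : {set 'I_d})
  (p : vec d) (x : vec d) (q : vec d) (y : vec d) : Prop :=
  exists s, gpath A X I p s /\ pend p s = q /\
    restrZ (~: I) (DeltaSeq (labels s)) = toZ y - toZ x.

Definition simple_cycle d (A : seq (act d)) (X : vec d -> Prop) (I : {set 'I_d})
  (p : vec d) (s : seq (act d * vec d)) : Prop :=
  s <> [::] /\ gpath A X I p s /\ pend p s = p /\ uniq (map snd s).

Definition SCdisp d (A : seq (act d)) (X : vec d -> Prop) (I : {set 'I_d}) (z : ivec d) : Prop :=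
  exists p s, simple_cycle A X I p s /\ z = restrZ (~: I) (DeltaSeq (labels s)).

Definition pospart d (z : ivec d) : vec d := [ffun i => `|Num.max (z i) 0|%N].
Definition negpart d (z : ivec d) : vec d := [ffun i => `|Num.max (- z i) 0|%N].

(* the net A_SC^G (coordinates outside J are 0) *)
Definition inASC d (A : seq (act d)) (X : vec d -> Prop) (I : {set 'I_d}) (a : act d) : Prop :=
  exists z, SCdisp A X I z /\ a = (negpart z, pospart z).

Definition DeltaStarASC d (A : seq (act d)) (X : vec d -> Prop) (I : {set 'I_d}) (v : ivec d) : Prop :=
  exists sigma : seq (act d), (forall a, a \in sigma -> inASC A X I a) /\ v = DeltaSeq sigma.

(* x in N^J : zero on I *)
Definition onJ d (I : {set 'I_d}) (x : vec d) : Prop := forall i, i \in I -> x i = 0%N.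

From mathcomp Require Import all_boot all_order all_algebra.
From mathcomp Require Import zify ring.
From Stdlib Require Import ClassicalEpsilon Relations.Relation_Operators.
Set Implicit Arguments. Unset Strict Implicit. Unset Printing Implicit Defensive.
Import Order.TTheory GRing.Theory Num.Theory.
Local Open Scope ring_scope.

(* A closed walk of the graph (Q, A, E) that revisits a state splits there into
   two shorter closed walks, so its displacement on J is a sum of displacements
   of simple cycles. Conversely, X being a bottom SCC, runs of A from x to x'
   and back inside X project to walks between x|_I and x'|_I whose displacements
   cancel; conjugating a simple cycle at x'|_I by such a round trip realizes its
   displacement at any state of Q, and closed walks at a state concatenate.
   For the norm bound, conservativity bounds every configuration of X by the
   weight of a fixed one, so Q is finite; a simple cycle has at most |Q| edges,
   each moving a coordinate by at most ||A||. *)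

Section Displacements.
Variable d : nat.
Implicit Types (A s : seq (act d)) (z : ivec d).

Lemma DeltaSeq_nil : DeltaSeq (@nil (act d)) = 0.
Proof. exact: big_nil. Qed.

Lemma DeltaSeq_cons a s : DeltaSeq (a :: s) = Delta a + DeltaSeq s.
Proof. exact: big_cons. Qed.

Lemma DeltaSeq_cat s1 s2 : DeltaSeq (s1 ++ s2) = DeltaSeq s1 + DeltaSeq s2.
Proof. exact: big_cat. Qed.

Lemma DeltaSeq_perm s1 s2 : perm_eq s1 s2 -> DeltaSeq s1 = DeltaSeq s2.
Proof. exact: perm_big. Qed.

Lemma Delta_vadd (c : vec d) (a : act d) :
  toZ (vadd c a.2) - toZ (vadd c a.1) = Delta a.
Proof. by apply/ffunP => i; rewrite /Delta !ffunE; lia. Qed.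

Lemma Delta_parts z : Delta (negpart z, pospart z) = z.
Proof. by apply/ffunP => i; rewrite /Delta /= !ffunE; lia. Qed.

Lemma negpart_le z i : (negpart z i <= `|z i|)%N.
Proof. by rewrite ffunE; lia. Qed.

Lemma pospart_le z i : (pospart z i <= `|z i|)%N.
Proof. by rewrite ffunE; lia. Qed.

Lemma restr_vadd (I : {set 'I_d}) (x y : vec d) :
  restr I (vadd x y) = vadd (restr I x) (restr I y).
Proof. by apply/ffunP => i; rewrite !ffunE; case: (i \in I). Qed.

Lemma restrZ0 (J : {set 'I_d}) : restrZ J 0 = 0.
Proof. by apply/ffunP => i; rewrite !ffunE; case: (i \in J). Qed.

Lemma restrZD (J : {set 'I_d}) z1 z2 :
  restrZ J (z1 + z2) = restrZ J z1 + restrZ J z2.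
Proof. by apply/ffunP => i; rewrite !ffunE; case: (i \in J); rewrite ?addr0. Qed.

Lemma restrZ_abs_le (J : {set 'I_d}) z i : (`|restrZ J z i| <= `|z i|)%N.
Proof. by rewrite ffunE; case: (i \in J). Qed.

Lemma Delta_abs_le A (a : act d) i : a \in A -> (`|Delta a i| <= normA A)%N.
Proof.
move=> aA; have : (maxn (a.1 i) (a.2 i) <= normA A)%N.
  apply: leq_trans (leq_bigmax_seq _ aA isT).
  exact: (leq_bigmax (F := fun j => maxn (a.1 j) (a.2 j)) i).
by rewrite /Delta !ffunE /=; lia.
Qed.

Lemma DeltaSeq_abs_le A s i : {subset s <= A} ->
  (`|DeltaSeq s i| <= normA A * size s)%N.
Proof.
elim: s => [|a s IH] sA; first by rewrite DeltaSeq_nil ffunE.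
have Da := Delta_abs_le i (sA a (mem_head _ _)).
have Ds := IH (fun b bs => sA b (mem_behead (s := a :: s) bs)).
by rewrite DeltaSeq_cons ffunE /= mulnS; lia.
Qed.

Definition weight (w : 'I_d -> nat) (x : vec d) : nat := \sum_i x i * w i.

Lemma reach_weight A w x y :
  (forall a, a \in A -> \sum_(i < d) Delta a i * (w i)%:Z = 0) ->
  reach A x y -> weight w x = weight w y.
Proof.
move=> consA; elim=> {x y} [_ _ [a [aA [c [-> ->]]]]| // | x y z _ -> _ -> //].
apply/eqP; rewrite -eqz_nat /weight !(big_morph Posz PoszD erefl) eq_sym.
rewrite -subr_eq0 -sumrB -[X in _ == X](consA a aA); apply/eqP/eq_bigr => i _.
by rewrite /Delta !ffunE /= !PoszM !PoszD; ring.
Qed.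

Lemma leq_weight w (x : vec d) i : (0 < w i)%N -> (x i <= weight w x)%N.
Proof.
by move=> wi_gt0; rewrite /weight (bigD1 i) //= (leq_trans (leq_pmulr _ wi_gt0)) ?leq_addr.
Qed.

Lemma bounded_pred_enum (P : vec d -> Prop) N :
  (forall x, P x -> forall i, (x i <= N)%N) ->
  exists s : seq (vec d), uniq s /\ forall x, x \in s <-> P x.
Proof.
move=> boundP.
pose box := [seq ([ffun i => val (f i)] : vec d) | f : {ffun 'I_d -> 'I_N.+1}].
exists [seq x <- undup box | if excluded_middle_informative (P x) then true else false].
split; first exact/filter_uniq/undup_uniq.
move=> x; rewrite mem_filter mem_undup.
case: excluded_middle_informative => [Px|nPx]; split=> // _.
apply/imageP; exists [ffun i => inord (x i)] => //.
by apply/ffunP => i; rewrite !ffunE /= inordK // ltnS boundP.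
Qed.

End Displacements.

Lemma split_at_repeat (T U : eqType) (f : T -> U) (s : seq T) :
  ~~ uniq (map f s) ->
  exists s1 e1 s2 e2 s3, s = s1 ++ e1 :: s2 ++ e2 :: s3 /\ f e1 = f e2.
Proof.
elim: s => [|e s IH] //=; rewrite negb_and negbK => /orP[/mapP[e2 + fe]|/IH].
  by case/splitPr => s2 s3; exists [::], e, s2, e2, s3.
by move=> [s1 [e1 [s2 [e2 [s3 [-> fe]]]]]]; exists (e :: s1), e1, s2, e2, s3.
Qed.

Section PNS.
Variables (d : nat) (A : seq (act d)) (X : vec d -> Prop) (I : {set 'I_d}).
Implicit Types (p q : vec d) (s : seq (act d * vec d)) (v : ivec d).

Local Notation gpath := (gpath A X I).
Local Notation inQ := (inQ X I).

Lemma gpath_cat p s1 s2 :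
  gpath p (s1 ++ s2) <-> gpath p s1 /\ gpath (pend p s1) s2.
Proof. by elim: s1 p => [|[a q] s1 IH] p /=; [tauto | rewrite IH /pend /=; tauto]. Qed.

Lemma pend_cat p s1 s2 : pend p (s1 ++ s2) = pend (pend p s1) s2.
Proof. by rewrite /pend map_cat last_cat. Qed.

Lemma pend_cons p e s : pend p (e :: s) = pend e.2 s.
Proof. by []. Qed.

Lemma labels_cat s1 s2 : labels (s1 ++ s2) = labels s1 ++ labels s2.
Proof. exact: map_cat. Qed.

Lemma gpath_mem p s e : gpath p s -> e \in s -> e.1 \in A /\ inQ e.2.
Proof.
elim: s p => [|[a q] s IH] p //= [[_ [aA [Qq _]]] gs].
by rewrite inE => /orP[/eqP -> | /(IH q gs)].
Qed.

(* [vreach A X I p x p y] unfolds to [closed_walk_disp p (toZ y - toZ x)]. *)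
Definition closed_walk_disp p v :=
  exists s, gpath p s /\ pend p s = p /\ restrZ (~: I) (DeltaSeq (labels s)) = v.

Lemma closed_walk_disp0 p : closed_walk_disp p 0.
Proof. by exists [::]; rewrite /= DeltaSeq_nil restrZ0. Qed.

Lemma closed_walk_dispD p v1 v2 :
  closed_walk_disp p v1 -> closed_walk_disp p v2 -> closed_walk_disp p (v1 + v2).
Proof.
move=> [s1 [g1 [e1 <-]]] [s2 [g2 [e2 <-]]]; exists (s1 ++ s2).
rewrite gpath_cat pend_cat e1 labels_cat DeltaSeq_cat restrZD.
by split.
Qed.

Lemma DeltaStarASC0 : DeltaStarASC A X I 0.
Proof. by exists [::]; rewrite DeltaSeq_nil. Qed.

Lemma DeltaStarASCD v1 v2 :
  DeltaStarASC A X I v1 -> DeltaStarASC A X I v2 -> DeltaStarASC A X I (v1 + v2).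
Proof.
move=> [s1 [ASC1 ->]] [s2 [ASC2 ->]]; exists (s1 ++ s2).
by rewrite DeltaSeq_cat; split=> // a; rewrite mem_cat => /orP[/ASC1|/ASC2].
Qed.

Lemma SCdisp_DeltaStarASC v : SCdisp A X I v -> DeltaStarASC A X I v.
Proof.
move=> SCv; exists [:: (negpart v, pospart v)].
rewrite DeltaSeq_cons DeltaSeq_nil addr0 Delta_parts.
by split=> // a; rewrite inE => /eqP ->; exists v.
Qed.

Lemma closed_walk_DeltaStarASC p v :
  closed_walk_disp p v -> DeltaStarASC A X I v.
Proof.
move=> [s [+ [+ <-]]]; elim: {s}(size s).+1 {-2}s (ltnSn (size s)) p => // n IH s.
rewrite ltnS => size_s p gs es.
have [->|s_nil] := eqVneq s [::].
  by rewrite DeltaSeq_nil restrZ0; exact: DeltaStarASC0.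
have [uniq_s|] := boolP (uniq (map snd s)).
  by apply: SCdisp_DeltaStarASC; exists p, s; split=> //; split=> //; apply/eqP.
move=> /split_at_repeat[s1 [[a1 q] [s2 [[a2 q'] [s3 [def_s /= qE]]]]]].
subst s q'; move: size_s gs es; rewrite !size_cat /= !size_cat /= => size_s.
rewrite gpath_cat /= gpath_cat /= !(pend_cat, pend_cons).
move=> [g1 [e1 [g2 [e2 g3]]]] es.
have -> : DeltaSeq (labels (s1 ++ (a1, q) :: s2 ++ (a2, q) :: s3)) =
    DeltaSeq (labels (s1 ++ (a1, q) :: s3)) + DeltaSeq (labels (s2 ++ [:: (a2, q)])).
  rewrite -DeltaSeq_cat -labels_cat; apply/DeltaSeq_perm/perm_map.
  by apply/permP => P; rewrite !count_cat /= !count_cat /=; lia.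
rewrite restrZD; apply: DeltaStarASCD.
  apply: (IH _ _ p); first by rewrite size_cat /=; lia.
    by rewrite gpath_cat.
  by rewrite !(pend_cat, pend_cons).
apply: (IH _ _ q); first by rewrite size_cat /=; lia.
  by rewrite gpath_cat.
by rewrite pend_cat.
Qed.

Hypothesis bottomX : bottomSCC A X.

Lemma reach_gpath x y : X x -> reach A x y ->
  exists s, gpath (restr I x) s /\ pend (restr I x) s = restr I y /\
    DeltaSeq (labels s) = toZ y - toZ x.
Proof.
move=> + xy; elim: xy => {x y} [x y xy|x|x y z xy IHxy _ IHyz] Xx.
- have Xy : X y by apply/(bottomX.2 x Xx)/rt_step.
  case: xy => a [aA [c [ex ey]]]; subst x y.
  exists [:: (a, restr I (vadd c a.2))].
  rewrite DeltaSeq_cons DeltaSeq_nil addr0 Delta_vadd.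
  do !split=> //; [by exists (vadd c a.1) | by exists (vadd c a.2) | exists (restr I c)].
  by rewrite !restr_vadd.
- by exists [::]; rewrite DeltaSeq_nil subrr.
- have [s1 [g1 [e1 D1]]] := IHxy Xx.
  have [s2 [g2 [e2 D2]]] := IHyz (proj1 (bottomX.2 x Xx y) xy).
  exists (s1 ++ s2); rewrite gpath_cat pend_cat labels_cat DeltaSeq_cat e1 D1 D2.
  by rewrite addrC addrA subrK.
Qed.

Lemma closed_walk_disp_transfer p q v :
  inQ p -> inQ q -> closed_walk_disp q v -> closed_walk_disp p v.
Proof.
move=> [x [Xx ->]] [y [Xy ->]] [c [gc [ec Dc]]].
have [s1 [g1 [e1 D1]]] := reach_gpath Xx (proj2 (bottomX.2 x Xx y) Xy).
have [s2 [g2 [e2 D2]]] := reach_gpath Xy (proj2 (bottomX.2 y Xy x) Xx).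
exists (s1 ++ c ++ s2).
rewrite !(gpath_cat, pend_cat, labels_cat, DeltaSeq_cat) e1 ec e2 !restrZD D1 D2 Dc.
by rewrite addrCA -restrZD addrA subrK subrr restrZ0 addr0.
Qed.

Lemma SCdisp_closed_walk v :
  SCdisp A X I v -> exists2 q, inQ q & closed_walk_disp q v.
Proof.
move=> [q [s [[s_nil [gs [es _]]] ->]]]; exists q; last by exists s.
by case: s s_nil gs {es} => [|[a q'] s] // _ [[]].
Qed.

Lemma DeltaStarASC_closed_walk p v :
  inQ p -> DeltaStarASC A X I v -> closed_walk_disp p v.
Proof.
move=> Qp [sigma [ASCsigma ->]]; elim: sigma ASCsigma => [|a sigma IH] ASCsigma.
  by rewrite DeltaSeq_nil; exact: closed_walk_disp0.
rewrite DeltaSeq_cons; apply: closed_walk_dispD.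
  have [z [SCz ->]] := ASCsigma a (mem_head _ _).
  have [q Qq] := SCdisp_closed_walk SCz.
  by rewrite Delta_parts; exact: closed_walk_disp_transfer.
by apply: IH => b bs; apply: ASCsigma; rewrite inE bs orbT.
Qed.

Lemma simple_cycle_size_le (Qs : seq (vec d)) p s :
  (forall q, inQ q -> q \in Qs) -> simple_cycle A X I p s -> (size s <= size Qs)%N.
Proof.
move=> QQs [_ [gs [_ uniq_s]]]; rewrite -(size_map snd s).
apply: uniq_leq_size uniq_s _ => _ /mapP[e es ->].
by apply/QQs; case: (gpath_mem gs es).
Qed.

Lemma SCdisp_abs_le (Qs : seq (vec d)) v i :
  (forall q, inQ q -> q \in Qs) -> SCdisp A X I v -> (`|v i| <= normA A * size Qs)%N.
Proof.
move=> QQs [p [s [SCs ->]]].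
apply: leq_trans (restrZ_abs_le _ _ _) _.
apply: leq_trans (DeltaSeq_abs_le (A := A) i _) _.
  by move=> _ /mapP[e es ->]; case: (gpath_mem SCs.2.1 es).
by rewrite /labels size_map leq_mul2l (simple_cycle_size_le QQs SCs) orbT.
Qed.

Lemma inQ_bounded :
  conservative A -> exists N, forall p, inQ p -> forall i, (p i <= N)%N.
Proof.
move=> [w [w_gt0 consA]]; have [[x0 Xx0] reachX] := bottomX.
exists (weight w x0) => _ [x [Xx ->]] i; rewrite ffunE; case: (i \in I) => //.
by rewrite (reach_weight consA (proj2 (reachX x0 Xx0 x) Xx)) leq_weight.
Qed.

End PNS.

Theorem proposition15 (d : nat) (A : seq (act d)) (X : vec d -> Prop) (I : {set 'I_d}) :
  conservative A -> bottomSCC A X ->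
  (forall p x y : vec d, inQ X I p -> onJ I x -> onJ I y ->
     (vreach A X I p x p y <-> DeltaStarASC A X I (toZ y - toZ x)))
  /\
  (exists Qs : seq (vec d), uniq Qs /\ (forall p, p \in Qs <-> inQ X I p) /\
     forall a, inASC A X I a -> forall i,
       (a.1 i <= normA A * size Qs)%N /\ (a.2 i <= normA A * size Qs)%N).
Proof.
move=> consA bottomX; split.
  (* x and y need not lie in N^J: only their difference matters. *)
  move=> p x y Qp _ _; split; first exact: closed_walk_DeltaStarASC.
  exact: DeltaStarASC_closed_walk.
have [N boundQ] := inQ_bounded I bottomX consA.
have [Qs [uniq_Qs memQs]] := bounded_pred_enum boundQ.
exists Qs; split=> //; split=> // _ [z [SCz ->]] i /=.
have z_le := SCdisp_abs_le i (fun q => proj2 (memQs q)) SCz.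
by split; apply: leq_trans z_le; [exact: negpart_le | exact: pospart_le].
Qed.
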